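(* Let $S$ be a zero-divisor free commutative $\Gamma$-semiring with zero having a left unity and a right unity. Then $S$ is a $\Gamma$-semifield if and only if for every non-constant fuzzy ideal $\mu$ of $S$ one has $\mu(x)=\mu(y)<\mu(0)$ for all $x,y\in S\setminus\{0\}$.
   Context: A $\Gamma$-semiring: $S$ and $\Gamma$ are additive commutative semigroups with a map $S\times\Gamma\times S\to S$, $(a,\alpha,b)\mapsto a\alpha b$, such that $(a+b)\alpha c=a\alpha c+b\alpha c$, $a\alpha(b+c)=a\alpha b+a\alpha c$, $a(\alpha+\beta)b=a\alpha b+a\beta b$, $a\alpha(b\beta c)=(a\alpha b)\beta c$. With zero: $(S,+)$, $(\Gamma,+)$ are monoids, $0_S\alpha x=0_S=x\alpha0_S$, $x0_\Gamma y=0_S$. Commutative: $a\alpha b=b\alpha a$ for all $a,b\in S,\alpha\in\Gamma$. Zero-divisor free: $a\alpha b=0$ implies $a=0$ or $\alpha=0$ or $b=0$. A left unity of $S$ is a finite family $e_i\in S,\delta_i\in\Gamma$ with $\sum_ie_i\delta_ia=a$ for all $a\in S$; a right unity is a finite family $\gamma_j\in\Gamma,f_j\in S$ with $\sum_ja\gamma_jf_j=a$ for all $a\in S$. A $\Gamma$-semifield is a commutative $\Gamma$-semiring such that for every $a\neq0$ in $S$ and $\alpha\neq0$ in $\Gamma$ there exist $b\in S,\beta\in\Gamma$ with $a\alpha b\beta d=d$ for all $d\in S$. A fuzzy ideal of $S$ is a map $\mu:S\to[0,1]$, not identically $0$, with $\mu(x+y)\ge\min[\mu(x),\mu(y)]$,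 $\mu(x\gamma y)\ge\mu(y)$ and $\mu(x\gamma y)\ge\mu(x)$ for all $x,y\in S,\gamma\in\Gamma$; by convention every fuzzy ideal satisfies $\mu(0)=1$. *)

From Stdlib Require Import Reals List.
Open Scope R_scope.

Record GammaData (S G : Type) := {
  addS : S -> S -> S;
  zeroS : S;
  addG : G -> G -> G;
  zeroG : G;
  gmul : S -> G -> S -> S
}.

Arguments addS {S G} _ _ _.
Arguments zeroS {S G} _.
Arguments addG {S G} _ _ _.
Arguments zeroG {S G} _.
Arguments gmul {S G} _ _ _ _.

Section Defs.
Context {S G : Type} (D : GammaData S G).

Local Notation "x +s y" := (addS D x y) (at level 50, left associativity).
Local Notation "x <+> y" := (addG D x y) (at level 50).
Local Notation m := (gmul D).
Local Notation z0 := (zeroS D).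

Definition is_GammaSemiring_with_zero : Prop :=
  (forall x y z, x +s (y +s z) = (x +s y) +s z) /\
  (forall x y, x +s y = y +s x) /\
  (forall x, x +s z0 = x) /\
  (forall a b c, a <+> (b <+> c) = (a <+> b) <+> c) /\
  (forall a b, a <+> b = b <+> a) /\
  (forall a, a <+> zeroG D = a) /\
  (forall a b c al, m (a +s b) al c = m a al c +s m b al c) /\
  (forall a b c al, m a al (b +s c) = m a al b +s m a al c) /\
  (forall a b al be, m a (al <+> be) b = m a al b +s m a be b) /\
  (forall a b c al be, m a al (m b be c) = m (m a al b) be c) /\
  (forall x al, m z0 al x = z0 /\ m x al z0 = z0) /\
  (forall x y, m x (zeroG D) y = z0).

Definition is_commutative : Prop :=
  forall a b al, m a al b = m b al a.

Definition zero_divisor_free : Prop :=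
  forall a al b, m a al b = z0 -> a = z0 \/ al = zeroG D \/ b = z0.

(* finite families are represented by lists *)
Definition has_left_unity : Prop :=
  exists l : list (S * G),
    forall a, fold_right (fun p acc => m (fst p) (snd p) a +s acc) z0 l = a.

Definition has_right_unity : Prop :=
  exists l : list (G * S),
    forall a, fold_right (fun p acc => m a (fst p) (snd p) +s acc) z0 l = a.

Definition is_GammaSemifield : Prop :=
  is_commutative /\
  forall a al, a <> z0 -> al <> zeroG D ->
    exists b be, forall d, m (m a al b) be d = d.

(* Fuzzy ideal, including the paper's convention mu(0) = 1. *)
Definition is_fuzzy_ideal (mu : S -> R) : Prop :=
  (forall x, 0 <= mu x <= 1)%R /\
  (exists x, mu x <> 0%R) /\
  (forall x y, Rmin (mu x) (mu y) <= mu (x +s y))%R /\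
  (forall x y g, mu y <= mu (m x g y) /\ mu x <= mu (m x g y))%R /\
  mu z0 = 1%R.

Definition non_constant (mu : S -> R) : Prop :=
  exists x y, mu x <> mu y.

End Defs.

(* In a Gamma-semifield every nonzero [x] "divides" every [d]: [d = (x g b) be d],
   so a fuzzy ideal takes its minimum at each nonzero element; being non-constant,
   it is constant on the nonzero elements and strictly smaller there than at 0.
   Conversely, for [a <> 0] and [al <> 0] the indicator of the ideal [a al S] is a
   fuzzy ideal; it takes the value 1 at the nonzero element [a al a], so the
   criterion forces it to be 1 everywhere, i.e. [a al S = S].  Writing
   [a = a al e] and [e = a al b] then makes [a al b] with [al] a unity. *)
From Stdlib Require Import Reals Lra Classical ClassicalDescription.
Open Scope R_scope.

Lemma criterion_of_min_at_nonzero {S : Type} (z : S) {mu : S -> R} :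
  non_constant mu ->
  (forall x d, x <> z -> mu x <= mu d) ->
  forall x y, x <> z -> y <> z -> mu x = mu y /\ mu y < mu z.
Proof.
  intros [u [v Huv]] Hmin x y Hx Hy.
  assert (Exy : mu x = mu y) by (pose proof (Hmin x y Hx); pose proof (Hmin y x Hy); lra).
  split; [exact Exy|].
  destruct (Rle_lt_or_eq_dec _ _ (Hmin y z Hy)) as [Hlt|Heq]; [exact Hlt|].
  exfalso; apply Huv.
  assert (Hconst : forall d, mu d = mu y).
  { intro d; destruct (classic (d = z)) as [->|Hd]; [now rewrite Heq|].
    pose proof (Hmin y d Hy); pose proof (Hmin d y Hd); lra. }
  now rewrite !Hconst.
Qed.

Section GammaSemiring.
Context {S G : Type} (D : GammaData S G).

Local Notation "x +s y" := (addS D x y) (at level 50, left associativity).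
Local Notation m := (gmul D).
Local Notation z0 := (zeroS D).

Hypothesis HS : is_GammaSemiring_with_zero D.

Lemma nonzero_gamma_of_left_unity :
  has_left_unity D -> forall x, x <> z0 -> exists g, g <> zeroG D.
Proof.
  destruct HS as (_&_&Hadd0&_&_&_&_&_&_&_&_&Hzg).
  intros [l Hl] x Hx.
  apply NNPP; intro Hall; apply Hx; rewrite <- (Hl x).
  clear Hl; induction l as [|p l IH]; simpl; [reflexivity|].
  assert (Hp : snd p = zeroG D) by (apply NNPP; intro Hp; apply Hall; eauto).
  now rewrite IH, Hp, Hzg, Hadd0.
Qed.

Lemma semifield_fuzzy_ideal_min_at_nonzero (mu : S -> R) :
  has_left_unity D -> is_GammaSemifield D -> is_fuzzy_ideal D mu ->
  forall x d, x <> z0 -> mu x <= mu d.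
Proof.
  intros Hlu [_ Hsf] (_&_&_&Hmul&_) x d Hx.
  destruct (nonzero_gamma_of_left_unity Hlu x Hx) as [g Hg].
  destruct (Hsf x g Hx Hg) as [b [be Hbe]].
  rewrite <- (Hbe d).
  destruct (Hmul (m x g b) d be) as [_ H1].
  destruct (Hmul x b g) as [_ H2].
  lra.
Qed.

Definition is_ideal (P : S -> Prop) : Prop :=
  P z0 /\
  (forall x y, P x -> P y -> P (x +s y)) /\
  (forall x y g, P y -> P (m x g y)) /\
  (forall x y g, P x -> P (m x g y)).

Definition principal_set (a : S) (al : G) (x : S) : Prop := exists b, x = m a al b.

Definition indicator (P : S -> Prop) (x : S) : R :=
  if excluded_middle_informative (P x) then 1 else 0.

Lemma principal_set_is_ideal a al :
  is_commutative D -> is_ideal (principal_set a al).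
Proof.
  destruct HS as (_&_&_&_&_&_&_&HDr&_&Hass&Hz&_).
  intro Hc; repeat split.
  - exists z0; symmetry; apply Hz.
  - intros x y [b1 ->] [b2 ->]; exists (b1 +s b2); now rewrite HDr.
  - intros x y g [b ->]; exists (m b g x); now rewrite Hc, <- Hass.
  - intros x y g [b ->]; exists (m b g y); now rewrite <- Hass.
Qed.

Lemma indicator_fuzzy_ideal P : is_ideal P -> is_fuzzy_ideal D (indicator P).
Proof.
  intros (P0&PD&PMl&PMr); unfold indicator.
  split; [|split; [|split; [|split]]].
  - intro x; destruct (excluded_middle_informative (P x)); lra.
  - exists z0; destruct (excluded_middle_informative (P z0)); [lra|tauto].
  - intros x y.
    destruct (excluded_middle_informative (P x)), (excluded_middle_informative (P y)),
      (excluded_middle_informative (P (x +s y))); try (unfold Rmin; destruct Rle_dec; lra).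
    exfalso; auto.
  - intros x y g; split.
    + destruct (excluded_middle_informative (P y)),
        (excluded_middle_informative (P (m x g y))); try lra.
      exfalso; eauto.
    + destruct (excluded_middle_informative (P x)),
        (excluded_middle_informative (P (m x g y))); try lra.
      exfalso; eauto.
  - destruct (excluded_middle_informative (P z0)); tauto.
Qed.

Lemma ideal_full_of_criterion (P : S -> Prop) :
  (forall mu : S -> R, is_fuzzy_ideal D mu -> non_constant mu ->
     forall x y, x <> z0 -> y <> z0 -> mu x = mu y /\ mu y < mu z0) ->
  is_ideal P -> forall x, P x -> x <> z0 -> forall d, P d.
Proof.
  intros Hcrit HP x Px Hx d; apply NNPP; intro Pd.
  assert (P0 : P z0) by apply HP.
  assert (Hd : d <> z0) by (intros ->; contradiction).
  assert (Hnc : non_constant (indicator P)).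
  { exists z0, d; unfold indicator.
    destruct (excluded_middle_informative (P z0)); [|contradiction].
    destruct (excluded_middle_informative (P d)); [contradiction|lra]. }
  destruct (Hcrit _ (indicator_fuzzy_ideal P HP) Hnc x d Hx Hd) as [E _].
  revert E; unfold indicator.
  destruct (excluded_middle_informative (P x)); [|contradiction].
  destruct (excluded_middle_informative (P d)); [contradiction|lra].
Qed.

Lemma semifield_of_principal_full :
  is_commutative D ->
  (forall a al, a <> z0 -> al <> zeroG D -> forall d, principal_set a al d) ->
  is_GammaSemifield D.
Proof.
  destruct HS as (_&_&_&_&_&_&_&_&_&Hass&_&_).
  intros Hc Hfull; split; [exact Hc|].
  intros a al Ha Hal.
  destruct (Hfull a al Ha Hal a) as [e Ee].
  destruct (Hfull a al Ha Hal e) as [b Eb].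
  exists b, al; intro d.
  destruct (Hfull a al Ha Hal d) as [x ->].
  (* e al (a al x) = (a al e) al x = a al x *)
  now rewrite <- Eb, Hass, (Hc e a al), <- Ee.
Qed.

End GammaSemiring.

Theorem theorem3p10 (S G : Type) (D : GammaData S G) :
  is_GammaSemiring_with_zero D ->
  is_commutative D ->
  zero_divisor_free D ->
  has_left_unity D ->
  has_right_unity D ->
  (is_GammaSemifield D <->
   forall mu : S -> R, is_fuzzy_ideal D mu -> non_constant mu ->
     forall x y : S, x <> zeroS D -> y <> zeroS D ->
       mu x = mu y /\ mu y < mu (zeroS D)).
Proof.
  intros HS Hc Hzd Hlu _; split.
  - intros Hsf mu Hmu Hnc.
    apply (criterion_of_min_at_nonzero (zeroS D) Hnc).
    exact (semifield_fuzzy_ideal_min_at_nonzero D HS mu Hlu Hsf Hmu).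
  - intros Hcrit.
    apply (semifield_of_principal_full D HS Hc).
    intros a al Ha Hal.
    assert (Haa : gmul D a al a <> zeroS D).
    { intro E; destruct (Hzd _ _ _ E) as [|[|]]; contradiction. }
    exact (ideal_full_of_criterion D _ Hcrit (principal_set_is_ideal D HS a al Hc)
             _ (ex_intro _ a eq_refl) Haa).
Qed.
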